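(* Let $\eta>0$, $T>0$, and let $N$ be a standard Gaussian random variable. Let $\beta\in[0,+\infty]$, $\theta>0$, $v>0$, and let $f$ be a measurable function which is bounded from below on $[0,\beta]$. Let $u$ be any real number if $\beta=+\infty$, and $u=-v\beta$ if $\beta<+\infty$. Write $\omega=W(\theta v\eta^2T)$, where $W$ is the Lambert function, and suppose that $$\frac{\omega}{\eta^{2}T}+\frac{\omega^2}{2\eta^{2}T}\leq \theta v\beta .$$ Define $$L_{f,\beta}(\theta)=\mathbb{E}\left(\exp\left(-\theta f\left(e^{\eta\sqrt{T}N}\right)1_{e^{\eta\sqrt{T}N}\leq\beta}\right)\right).$$ Then $L_{f,\beta}(\theta)=L_\beta(\theta)\,I_{f,\beta}(\theta)$, where $$L_\beta(\theta)=\exp\left(-\left(\theta u+\frac{\omega}{\eta^{2}T}+\frac{\omega^2}{2\eta^{2}T}\right)\right),$$ $$I_{f,\beta}(\theta)=\mathbb{E}\left(\exp\left[-\theta\left(f\left(\frac{\omega}{\theta v\eta^2T}e^{\eta\sqrt{T}N}\right)-u-\frac{\omega}{\theta\eta^2T}e^{\eta\sqrt{T}N}\right)1_{N\leq \frac{\ln\beta}{\eta\sqrt{T}}+\frac{\omega}{\eta\sqrt{T}}}\right]\phi_\beta(N,\theta)\right),$$ $$\phi_\beta(y,\theta)=\exp\left(-\frac{\omega}{\eta^2T}\left(e^{\eta\sqrt{T}y}-1-\eta\sqrt{T}y\right)\right)\exp\left(\left(\frac{\omega}{\eta^2T}e^{\eta\sqrt{T}y}-\theta v\beta\right)_+\right),$$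 with the conventions $\ln(+\infty)=+\infty$, $\ln 0=-\infty$ and $(-\infty)_+=0$.
   Context: The Lambert function $W:(-1/e,+\infty)\to(-1,+\infty)$ is the inverse of the strictly increasing bijection $x\in(-1,+\infty)\mapsto xe^x\in(-1/e,+\infty)$. For real $x$, $x_+=\max(x,0)$. When $\beta=+\infty$, the indicator $1_{e^{\eta\sqrt T N}\le\beta}$ is identically $1$ and the hypothesis inequality holds trivially. *)

From HB Require Import structures.
From mathcomp Require Import all_boot all_order all_algebra.
From mathcomp Require Import all_classical all_reals all_analysis.
Set Implicit Arguments. Unset Strict Implicit. Unset Printing Implicit Defensive.
Import Order.TTheory GRing.Theory Num.Theory.
Local Open Scope classical_set_scope.
Local Open Scope ring_scope.

(* Lambert function W : (-1/e, +oo) -> (-1, +oo), inverse of x |-> x e^x on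
   (-1, +oo).  For y outside (-1/e,+oo) the value is an unspecified default. *)
Definition LambertW (R : realType) (y : R) : R :=
  xget 0 [set x : R | -1 < x /\ x * expR x = y].

Set Warnings "-notation-overridden,-ambiguous-paths,-notation-incompatible-prefix,-deprecated".
From HB Require Import structures.
From mathcomp Require Import all_boot all_order all_algebra.
From mathcomp Require Import all_classical all_reals all_analysis.
From mathcomp Require Import measurable_realfun ring lra.
Import Order.TTheory GRing.Theory Num.Theory.
Import numFieldNormedType.Exports.
Local Open Scope classical_set_scope.
Local Open Scope ring_scope.

(* Cameron-Martin: for a standard Gaussian N and any real c,
   E[h(N)] = E[h(N - c) exp(c N - c^2/2)] for every nonnegative measurable h.
   Apply it to the integrand of L_{f,beta} with c = omega/(eta sqrt T).  Since
   omega e^omega = theta v eta^2 T, we get e^{eta sqrt T (y - c)} =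
   omega e^{eta sqrt T y} / (theta v eta^2 T), so the event
   {e^{eta sqrt T (N - c)} <= beta} becomes {N <= ln beta/(eta sqrt T) + c}.
   Below this threshold the positive part in phi_beta vanishes; above it (then
   beta is finite and u = -v beta) it replaces the f-term cut off by the
   indicator.  In both cases the exponents agree with those of L_beta times the
   integrand of I_{f,beta}. *)

Section integral_density.
Local Open Scope ereal_scope.
Context {d} {T : measurableType d} {R : realType}.
Context {mu nu : {measure set T -> \bar R}} {g : T -> R}.
Hypotheses (mg : measurable_fun setT g) (g0 : forall x, (0 <= g x)%R)
  (nuE : forall A, measurable A -> nu A = \int[mu]_(x in A) (g x)%:E).

Let mgE : measurable_fun setT (EFin \o g).
Proof. exact/measurable_EFinP. Qed.

Let gE0 x : 0 <= (g x)%:E. Proof. by rewrite lee_fin. Qed.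

Lemma integral_indic_density A : measurable A ->
  \int[nu]_x (\1_A x)%:E = \int[mu]_x ((\1_A x)%:E * (g x)%:E).
Proof.
move=> mA; rewrite integral_indic// setIT nuE// integral_mkcond.
apply: eq_integral => x _; rewrite patchE indicE.
by case: ifPn => _; rewrite ?mul1e ?mul0e.
Qed.

Import HBNNSimple.

Lemma integral_nnsfun_density (h : {nnsfun T >-> R}) :
  \int[nu]_x (h x)%:E = \int[mu]_x ((h x)%:E * (g x)%:E).
Proof.
have mhr r : measurable (h @^-1` [set r]).
  by rewrite -[X in measurable X]setTI; exact: (measurable_funP h).
under eq_integral do rewrite fimfunE -fsumEFin//.
rewrite ge0_integral_fsum//; last 2 first.
  - by move=> r; exact/measurable_EFinP/measurableT_comp.
  - by move=> r x _; rewrite nnfun_muleindic_ge0.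
under [RHS]eq_integral => x _.
  rewrite fimfunE -fsumEFin// ge0_mule_fsuml; last first.
    by move=> r; rewrite nnfun_muleindic_ge0.
  over.
rewrite [RHS]ge0_integral_fsum//; last 2 first.
  - move=> r; apply: emeasurable_funM => //.
    exact/measurable_EFinP/measurableT_comp.
  - by move=> r x _; rewrite mule_ge0// nnfun_muleindic_ge0.
apply: eq_fsbigr => r /[!inE] -[t _ <-].
under eq_integral do rewrite EFinM.
rewrite ge0_integralZl//; last 2 first.
  - exact/measurable_EFinP/measurable_indic.
  - by rewrite lee_fin.
rewrite integral_indic_density//.
under [RHS]eq_integral do rewrite EFinM -muleA.
rewrite ge0_integralZl//.
- apply: emeasurable_funM => //; exact/measurable_EFinP/measurable_indic.
- by move=> x _; rewrite mule_ge0// lee_fin.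
- by rewrite lee_fin.
Qed.

Lemma ge0_integral_density (h : T -> \bar R) :
  measurable_fun setT h -> (forall x, 0 <= h x) ->
  \int[nu]_x h x = \int[mu]_x (h x * (g x)%:E).
Proof.
move=> mh h0; pose h_ := nnsfun_approx measurableT mh.
have h_cvg x : (EFin \o h_^~ x) @ \oo --> h x.
  by apply: cvg_nnsfun_approx => // y _; exact: h0.
have h_nd x : {homo (fun n => (h_ n x)%:E) : n m / (n <= m)%N >-> n <= m}.
  by move=> m n mn; rewrite lee_fin; exact/lefP/nd_nnsfun_approx.
have mh_ n : measurable_fun setT (fun x => (h_ n x)%:E).
  exact/measurable_EFinP/(measurable_funP (h_ n)).
transitivity (limn (fun n => \int[nu]_x (h_ n x)%:E)).
  rewrite -monotone_convergence//.
  - by apply: eq_integral => x _; apply/esym/cvg_lim => //; exact: h_cvg.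
  - by move=> n x _; rewrite lee_fin.
under eq_fun do rewrite integral_nnsfun_density.
rewrite -monotone_convergence//.
- apply: eq_integral => x _; apply/cvg_lim => //.
  by apply: cvgeZr => //; exact: h_cvg.
- by move=> n; exact: emeasurable_funM.
- by move=> n x _; rewrite mule_ge0// lee_fin.
- by move=> x _ m n mn; apply: lee_wpmul2r => //; exact: h_nd.
Qed.

End integral_density.

Section gaussian_shift.
Local Open Scope ereal_scope.
Context {R : realType}.
Local Notation mu := (@lebesgue_measure R).

Let measurable_translate (c : R) :
  measurable_fun [set: R] ((fun y => y - c)%R : R -> measurableTypeR R).
Proof. exact: measurable_funB. Qed.

Lemma lebesgue_measure_translate (c : R) (A : set R) : measurable A ->
  pushforward mu ((fun y => y - c)%R : R -> measurableTypeR R) A = mu A.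
Proof.
(* [mf] provides the measure structure of the pushforward. *)
have mf := measurable_translate c.
move=> mA; apply: esym; apply: (lebesgue_measure_unique (mu := pushforward mu _)) => //.
move=> /= _ [[a b]] _ <-.
rewrite /pushforward (_ : _ @^-1` _ = `](a + c)%R, (b + c)%R]%classic).
  rewrite !lebesgue_measure_itv/= !lte_fin ltrD2r.
  by case: ifPn => // _; rewrite -!EFinD; congr EFin; ring.
by apply/seteqP; split => x /=; rewrite !in_itv/= => /andP[? ?]; apply/andP; split; lra.
Qed.

Lemma ge0_integral_translate (c : R) (k : R -> \bar R) :
  measurable_fun setT k -> (forall x, 0 <= k x) ->
  \int[mu]_x k (x - c)%R = \int[mu]_x k x.
Proof.
move=> mk k0; have mf := measurable_translate c.
transitivity (\int[pushforward mu ((fun y => y - c)%R : R -> measurableTypeR R)]_x k x).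
  by rewrite ge0_integral_pushforward.
by apply: eq_measure_integral => A mA _; exact: lebesgue_measure_translate.
Qed.

Lemma normal_pdf01B (c y : R) :
  normal_pdf 0 1 (y - c) = (normal_pdf 0 1 y * expR (c * y - c ^+ 2 / 2))%R.
Proof.
rewrite /normal_pdf oner_eq0 /normal_fun -mulrA -expRD.
by congr (_ * expR _)%R; rewrite expr1n; field.
Qed.

Lemma ge0_integral_normal01_shift (c : R) (h : R -> \bar R) :
  measurable_fun setT h -> (forall x, 0 <= h x) ->
  \int[normal_prob 0 1]_y h y =
  \int[normal_prob 0 1]_y (h (y - c)%R * (expR (c * y - c ^+ 2 / 2))%:E).
Proof.
move=> mh h0.
have mp : measurable_fun [set: measurableTypeR R] (normal_pdf (0 : R) 1).
  exact: measurable_normal_pdf.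
have p0 := normal_pdf_ge0 (0 : R) 1.
have mhc : measurable_fun setT (fun y : R => h (y - c)%R).
  exact: measurableT_comp mh (measurable_translate c).
have pE A : measurable A ->
    normal_prob 0 1 A = \int[mu]_(x in A) (normal_pdf 0 1 x)%:E by [].
rewrite !(ge0_integral_density mp p0 pE)//; last 2 first.
  - apply: emeasurable_funM => //; apply/measurable_EFinP.
    apply: measurableT_comp => //.
    by apply: measurable_funB => //; exact: measurable_funM.
  - by move=> y; rewrite mule_ge0// lee_fin expR_ge0.
rewrite -(ge0_integral_translate c); last 2 first.
  - by apply: emeasurable_funM => //; exact/measurable_EFinP.
  - by move=> y; rewrite mule_ge0// lee_fin.
congr integral; apply/funext => y.
by rewrite (normal_pdf01B c y) EFinM [X in _ * X]muleC muleA.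
Qed.

End gaussian_shift.

Lemma ge0_integral_normal01_RV {R : realType} {d} {Omega : measurableType d}
    {P : probability Omega R} {N : {RV P >-> R}} (h : R -> \bar R) :
  (forall A : set R, measurable A -> distribution P N A = normal_prob 0 1 A) ->
  measurable_fun setT h -> (forall x, (0 <= h x)%E) ->
  (\int[P]_w h (N w) = \int[normal_prob 0 1]_y h y)%E.
Proof.
move=> hN mh h0.
have mN : measurable_fun [set: Omega] (N : Omega -> measurableTypeR R).
  exact: (measurable_funP N).
transitivity (\int[pushforward P (N : Omega -> measurableTypeR R)]_y h y)%E.
  by rewrite ge0_integral_pushforward// preimage_setT.
by apply: eq_measure_integral => A mA _; exact: hN.
Qed.

Lemma LambertWK (R : realType) (y : R) :
  0 < y -> LambertW y * expR (LambertW y) = y.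
Proof.
move=> y0; suff /(xgetPex 0) [] : exists x : R, -1 < x /\ x * expR x = y by [].
have cont : {within `[0, y], continuous (fun x : R => x * expR x)}.
  apply: continuous_subspaceT => x.
  by apply: cvgM; [exact: cvg_id | exact: continuous_expR].
have [x x0y xy] : exists2 x, x \in `[0, y] & x * expR x = y.
  apply: (IVT (ltW y0) cont); rewrite mul0r ge_min ltW//= le_max.
  by apply/orP; right; rewrite ler_peMr ?ltW// expR_gt1.
by exists x; split=> //; move: x0y; rewrite in_itv/= => /andP[x0 _]; lra.
Qed.

Section lambert_shift.
Context {R : realType}.
Context {eta T theta v u : R} {beta : \bar R} {f : R -> R}.
Hypotheses (heta : 0 < eta) (hT : 0 < T) (hbeta : (0 <= beta)%E).
Hypotheses (htheta : 0 < theta) (hv : 0 < v).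
Hypothesis hu : forall b : R, beta = b%:E -> u = - (v * b).

Lemma fine_maxe_le (x : R) : (x%:E <= beta)%E ->
  fine (maxe ((theta * v * x)%:E - theta%:E * v%:E * beta) 0)%E = 0.
Proof.
have tv0 : 0 < theta * v by rewrite mulr_gt0.
case: beta hbeta => [b _| _ _|//]; last first.
  by rewrite -EFinM gt0_muley ?lte_fin// addeNy maxNye.
rewrite lee_fin -!EFinM -EFinB -EFin_max => xb /=.
by apply/max_r; rewrite subr_le0 ler_pM2l.
Qed.

Lemma fine_maxe_gt (x : R) : (beta < x%:E)%E ->
  fine (maxe ((theta * v * x)%:E - theta%:E * v%:E * beta) 0)%E =
  theta * v * x + theta * u.
Proof.
case: beta hbeta hu => [b _ hub| _ _|//]; last by rewrite ltNge leey.
rewrite lte_fin -!EFinM -EFinB -EFin_max (hub b erefl) => bx /=.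
rewrite max_l; first ring.
by rewrite subr_ge0 ler_pM2l ?mulr_gt0 ?ltW.
Qed.

Local Notation omega := (LambertW (theta * v * eta ^+ 2 * T)).
Local Notation s := (eta * Num.sqrt T).

Let s_gt0 : 0 < s. Proof. by rewrite mulr_gt0 ?sqrtr_gt0. Qed.

Let sqr_s : s ^+ 2 = eta ^+ 2 * T. Proof. by rewrite exprMn sqr_sqrtr ?ltW. Qed.

Let omegaK : omega * expR omega = theta * v * eta ^+ 2 * T.
Proof. by apply: LambertWK; rewrite !mulr_gt0 ?exprn_gt0. Qed.

Let omega_neq0 : omega != 0.
Proof.
apply: contra_eq_neq omegaK => ->; rewrite mul0r eq_sym.
by rewrite !mulf_neq0 ?expf_neq0 ?gt_eqF.
Qed.

Lemma expR_shift_omega y :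
  expR (s * (y - omega / s)) = omega / (theta * v * eta ^+ 2 * T) * expR (s * y).
Proof.
rewrite mulrBr [s * (omega / s)]mulrC divfK ?gt_eqF//.
move: omegaK omega_neq0; set w := LambertW _ => <- w0.
by rewrite expRD expRN; field; rewrite w0 gt_eqF ?expR_gt0.
Qed.

Lemma le_lne_shift y :
  (y%:E <= lne beta * (s^-1)%:E + (omega / s)%:E)%E =
  ((expR (s * (y - omega / s)))%:E <= beta)%E.
Proof.
case: beta hbeta => [b| _|//]; last first.
  by rewrite gt0_mulye ?lte_fin ?invr_gt0// addye// !leey.
rewrite lee_fin le_eqVlt => /orP[/eqP <-|b0].
  rewrite le0_lneNy// gt0_mulNye ?lte_fin ?invr_gt0// addNye leeNy_eq.
  by rewrite lee_fin leNgt expR_gt0.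
rewrite lne_EFin// -EFinM -EFinD !lee_fin -{2}(lnK b0) ler_expR.
rewrite -mulrDl ler_pdivlMr// mulrBr [s * (omega / s)]mulrC divfK ?gt_eqF//.
by rewrite lerBlDr mulrC.
Qed.

Local Notation c := (omega / s).
Local Notation phi := (fun y : R =>
  expR (- (omega / (eta ^+ 2 * T) * (expR (s * y) - 1 - s * y)))
  * expR (fine (maxe ((omega / (eta ^+ 2 * T) * expR (s * y))%:E
                       - theta%:E * v%:E * beta)%E 0%E))).
Local Notation L := (expR (- (theta * u + omega / (eta ^+ 2 * T)
                              + omega ^+ 2 / (2 * (eta ^+ 2 * T))))).
Local Notation integrandL := (fun x : R =>
  expR (- theta * f (expR (s * x)) * ((expR (s * x))%:E <= beta)%E%:R)).
Local Notation integrandI := (fun y : R =>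
  expR (- theta * (f (omega / (theta * v * eta ^+ 2 * T) * expR (s * y))
                   - u - omega / (theta * eta ^+ 2 * T) * expR (s * y))
        * ((y%:E <= lne beta * (s^-1)%:E + (omega / s)%:E)%E%:R)) * phi y).

Lemma L_mul_integrandI y :
  L * integrandI y = integrandL (y - c) * expR (c * y - c ^+ 2 / 2).
Proof.
rewrite /= le_lne_shift expR_shift_omega.
rewrite (_ : omega / (eta ^+ 2 * T) * expR (s * y) =
  theta * v * (omega / (theta * v * eta ^+ 2 * T) * expR (s * y))); last first.
  by field; rewrite !gt_eqF.
(* Abstracting omega and s lets [field] eliminate T through s^2 = eta^2 T. *)
move: omega_neq0 s_gt0 sqr_s.
move: (LambertW _) (eta * Num.sqrt T) => w S w0 S0 sqrS.
have T_E : T = S ^+ 2 / eta ^+ 2 by rewrite sqrS; field; rewrite gt_eqF.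
set X := w / _ * expR (S * y).
have [Xb|bX] := leP X%:E beta.
- rewrite fine_maxe_le// expR0 !mulr1 -!expRD; congr expR.
  by rewrite /X T_E; field; rewrite !gt_eqF.
- rewrite fine_maxe_gt// !mulr0 expR0 !mul1r -!expRD; congr expR.
  by rewrite /X T_E; field; rewrite !gt_eqF.
Qed.

Hypothesis hf : measurable_fun setT f.

Lemma measurable_integrandL : measurable_fun setT integrandL.
Proof.
apply: measurableT_comp => //; apply: measurable_funM.
  by apply: measurable_funM => //; do 2 apply: measurableT_comp => //.
apply: (measurableT_comp (_ : measurable_fun setT (fun b : bool => b%:R : R))) => //.
apply: measurable_fun_lee => //; apply/measurable_EFinP.
by apply: measurableT_comp => //.
Qed.

Lemma measurable_integrandI : measurable_fun setT integrandI.
Proof.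
have L_neq0 : L != 0 by rewrite gt_eqF ?expR_gt0.
rewrite (_ : integrandI =
    fun y => L^-1 * (integrandL (y - c) * expR (c * y - c ^+ 2 / 2))).
  apply: measurable_funM => //; apply: measurable_funM.
    exact: measurableT_comp measurable_integrandL (measurable_funB _ _).
  by apply: measurableT_comp => //; exact: measurable_funB.
by apply/funext => y; rewrite -L_mul_integrandI mulKf.
Qed.

Lemma lambert_change_of_measure {d} {Omega : measurableType d}
    {P : probability Omega R} {N : {RV P >-> R}} :
  (forall A : set R, measurable A -> distribution P N A = normal_prob 0 1 A) ->
  (\int[P]_w (integrandL (N w))%:E = L%:E * \int[P]_w (integrandI (N w))%:E)%E.
Proof.
move=> hN.
have mL : measurable_fun setT (fun x => (integrandL x)%:E).
  by apply/measurable_EFinP; exact: measurable_integrandL.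
have mI : measurable_fun setT (fun y => (integrandI y)%:E).
  by apply/measurable_EFinP; exact: measurable_integrandI.
have I0 y : (0 <= (integrandI y)%:E)%E by rewrite lee_fin /= !mulr_ge0 ?expR_ge0.
rewrite (ge0_integral_normal01_RV (fun x => (integrandL x)%:E) hN)//.
rewrite (ge0_integral_normal01_RV (fun y => (integrandI y)%:E) hN)//.
rewrite (ge0_integral_normal01_shift c (fun x => (integrandL x)%:E))//.
rewrite -ge0_integralZl//.
apply: eq_integral => y _; rewrite -!EFinM; congr EFin.
exact/esym/L_mul_integrandI.
Qed.

End lambert_shift.

Theorem theorem1 (R : realType) (d : measure_display) (Omega : measurableType d)
  (P : probability Omega R) (N : {RV P >-> R})
  (eta T theta v u : R) (beta : \bar R) (f : R -> R)
  (heta : 0 < eta) (hT : 0 < T)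
  (hN : forall A : set R, measurable A -> distribution P N A = normal_prob 0 1 A)
  (hbeta : (0 <= beta)%E) (htheta : 0 < theta) (hv : 0 < v)
  (hf : measurable_fun setT f)
  (hfb : exists M : R, forall x : R, 0 <= x -> (x%:E <= beta)%E -> M <= f x)
  (hu : forall b : R, beta = b%:E -> u = - (v * b))
  (hineq : let omega := LambertW (theta * v * eta ^+ 2 * T) in
           ((omega / (eta ^+ 2 * T) + omega ^+ 2 / (2 * (eta ^+ 2 * T)))%:E
             <= theta%:E * v%:E * beta)%E) :
  let omega := LambertW (theta * v * eta ^+ 2 * T) in
  let s := eta * Num.sqrt T in
  let phi := fun y : R =>
    expR (- (omega / (eta ^+ 2 * T) * (expR (s * y) - 1 - s * y)))
    * expR (fine (maxe ((omega / (eta ^+ 2 * T) * expR (s * y))%:E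
                         - theta%:E * v%:E * beta)%E 0%E)) in
  let L_f := (\int[P]_w
      (expR (- theta * f (expR (s * N w))
               * ((expR (s * N w))%:E <= beta)%E%:R))%:E)%E in
  let L := expR (- (theta * u + omega / (eta ^+ 2 * T)
                    + omega ^+ 2 / (2 * (eta ^+ 2 * T)))) in
  let I := (\int[P]_w
      (expR (- theta * (f (omega / (theta * v * eta ^+ 2 * T) * expR (s * N w))
                         - u - omega / (theta * eta ^+ 2 * T) * expR (s * N w))
               * ((N w)%:E <= lne beta * (s^-1)%:E + (omega / s)%:E)%E%:R)
       * phi (N w))%:E)%E in
  L_f = (L%:E * I)%E.
Proof.
move=> omega s phi L_f L I.
exact: (lambert_change_of_measure heta hT hbeta htheta hv hu hf hN).
Qed.
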